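(* For every integer $d>3$, the lattice $[2 \; d+1 \; 2d]$ does not represent $-2$.
   Context: Notation: $[a\; b\; c]$ with $a,b,c\in\mathbb{Z}$ denotes a lattice of rank 2 with a basis whose Gram matrix is $\begin{pmatrix} a & b\\ b & c\end{pmatrix}$. A lattice represents an integer $m$ if it contains an element $x$ with $x^2=m$. *)

From mathcomp Require Import all_boot all_order all_algebra.
Set Implicit Arguments. Unset Strict Implicit. Unset Printing Implicit Defensive.
Import Order.TTheory GRing.Theory Num.Theory.
Local Open Scope ring_scope.

(* Gram matrix [[a, b], [b, c]] of the rank-2 lattice [a b c]. *)
Definition gram2 (a b c : int) : 'M[int]_2 :=
  \matrix_(i < 2, j < 2)
    (if (i == 0%N :> nat) && (j == 0%N :> nat) then a
     else if (i == 1%N :> nat) && (j == 1%N :> nat) then c else b).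

Definition lat_represents (G : 'M[int]_2) (m : int) : Prop :=
  exists v : 'rV[int]_2, (v *m G *m v^T) 0 0 = m.

(* The form 2x^2 + 2(d+1)xy + 2dy^2 factors as 2(x + y)(x + dy), so representing -2
   forces x + y and x + dy to be opposite units.  Their difference (d - 1)y is then
   +-2, which is impossible once d - 1 > 2. *)
From mathcomp Require Import all_boot all_order all_algebra.
From mathcomp Require Import zify ring.
Import Order.TTheory GRing.Theory Num.Theory.
Local Open Scope ring_scope.

Lemma gram2_qform (a b c : int) (v : 'rV[int]_2) :
  (v *m gram2 a b c *m v^T) 0 0
  = a * v 0 0 ^+ 2 + 2 * b * v 0 0 * v 0 1 + c * v 0 1 ^+ 2.
Proof.
rewrite !mxE !big_ord_recr !big_ord0 /= !mxE !big_ord_recr !big_ord0 /= !mxE /=.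
have -> : widen_ord (leqnSn 1) ord_max = 0 :> 'I_2 by apply: val_inj.
have -> : ord_max = 1 :> 'I_2 by apply: val_inj.
ring.
Qed.

Lemma lat_represents_gram2P (a b c m : int) :
  lat_represents (gram2 a b c) m <->
  exists x y : int, a * x ^+ 2 + 2 * b * x * y + c * y ^+ 2 = m.
Proof.
split=> [[v] | [x [y]]].
  by rewrite gram2_qform => <-; exists (v 0 0), (v 0 1).
move=> <-; exists (\row_j (if j == 0 then x else y)).
by rewrite gram2_qform !mxE.
Qed.

Lemma mulz_eqN1_dist (m n : int) : m * n = -1 -> `|n - m| = 2.
Proof.
move=> mn.
have /intUnitRing.unitzPl/orP[/eqP m1 | /eqP mN1] : - n * m = 1.
  by rewrite mulNr mulrC mn opprK.
- by move: mn; rewrite m1 mul1r => ->.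
- by move: mn; rewrite mN1 mulN1r => /oppr_inj ->.
Qed.

Lemma normz_mul_neq2 (k y : int) : 2 < k -> `|k * y| != 2.
Proof.
move=> k_gt2; rewrite normrM.
have [-> | y_neq0] := eqVneq y 0; first by rewrite normr0 mulr0.
have : 0 < `|y| by rewrite normr_gt0.
have : 2 < `|k| by rewrite gtr0_norm // (lt_trans _ k_gt2).
nia.
Qed.

Theorem lemma3p3 (d : int) :
  3 < d -> ~ lat_represents (gram2 2 (d + 1) (2 * d)) (-2).
Proof.
move=> d_gt3 /lat_represents_gram2P [x [y form_eq]].
have : (x + y) * (x + d * y) = -1.
  by apply: (@mulfI _ 2) => //; rewrite -[RHS]form_eq; ring.
move/mulz_eqN1_dist.
have -> : x + d * y - (x + y) = (d - 1) * y by ring.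
by apply/eqP/normz_mul_neq2; lia.
Qed.
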